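(* Let $(X,\sigma,\tau)$ be a separable, chronologically dense Lorentzian metric space satisfying the S-property, with c-completion $\overline X$. If $a,b,c\in\overline X$ satisfy $a\,\overline{\ll}\,b\,\overline{\ll}\,c$, then $\overline{\tau}(a,c)\geq\overline{\tau}(a,b)+\overline{\tau}(b,c)$.
   Context: A Lorentzian metric space $(X,\sigma,\tau)$ is a topological space with $\tau:X\times X\to[0,\infty]$ lower semicontinuous and satisfying $\tau(x,z)\geq\tau(x,y)+\tau(y,z)$ whenever $\tau(x,y),\tau(y,z)>0$. Write $x\ll y$ iff $\tau(x,y)>0$, $I^+(x)=\{y:x\ll y\}$, $I^-(x)=\{y:y\ll x\}$, $I^\pm[A]=\bigcup_{a\in A}I^\pm(a)$. Future (resp. past) chain: $x_n\ll x_{n+1}$ (resp. $x_{n+1}\ll x_n$) for all $n$. Separable: there is a countable $S$ with $x\ll y\Rightarrow\exists s\in S$, $x\ll s\ll y$. Chronologically dense: every $x$ with $I^-(x)\neq\emptyset$ (resp. $I^+(x)\neq\emptyset$) is the $\sigma$-limit of a future (resp. past) chain. Past set: $P=I^-[P]$; $\downarrow S=I^-[\{p:p\ll q\ \forall q\in S\}]$; IP: past set not the union of two proper past subsets; PIP: IP of the form $I^-(p)$; future sets, $\uparrow S$, IF, PIF dually. For nonempty IP $P$ and IF $F$, $P\sim_S F$ iff $P$ is a maximal IP in $\downarrow F$ and $F$ a maximal IF in $\uparrow P$; $P\sim_S\emptyset$ (resp. $\emptyset\sim_S F$) if the nonempty $P$ (resp. $F$) is S-related to no nonempty IF (resp.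 IP). S-property: for every $x$, $I^-(x)\sim_S I^+(x)$, and no PIF other than $I^+(x)$ (resp. PIP other than $I^-(x)$) is S-related to $I^-(x)$ (resp. $I^+(x)$). c-completion $\overline X=\{(P,F):P\sim_S F\}$. $\overline\tau((P,F),(P',F'))=0$ if $F=\emptyset$ or $P'=\emptyset$, and otherwise $\lim_n\tau(q_n,p'_n)$ for any past chain $\{q_n\}$ with $I^+[\{q_n\}]=F$ and future chain $\{p'_n\}$ with $I^-[\{p'_n\}]=P'$ (well defined). $a\,\overline\ll\,b$ iff $\overline\tau(a,b)>0$. *)

From HB Require Import structures.
From mathcomp Require Import all_boot all_order all_algebra.
From mathcomp Require Import all_classical all_reals all_analysis.
Set Implicit Arguments. Unset Strict Implicit. Unset Printing Implicit Defensive.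
Import Order.TTheory GRing.Theory Num.Theory.
Local Open Scope classical_set_scope.
Local Open Scope ereal_scope.

Section LMS.
Context {R : realType} {X : topologicalType} (tau : X -> X -> \bar R).

Definition is_LMS : Prop :=
  (forall x y, 0 <= tau x y) /\
  lower_semicontinuous (fun p : X * X => tau p.1 p.2) /\
  (forall x y z, 0 < tau x y -> 0 < tau y z -> tau x z >= tau x y + tau y z).

Definition ll (x y : X) : Prop := 0 < tau x y.
Definition Ifut (x : X) : set X := [set y | ll x y].
Definition Ipast (x : X) : set X := [set y | ll y x].
Definition IfutS (A : set X) : set X := [set y | exists2 a, A a & ll a y].
Definition IpastS (A : set X) : set X := [set y | exists2 a, A a & ll y a].

Definition future_chain (c : nat -> X) : Prop := forall n, ll (c n) (c n.+1).
Definition past_chain (c : nat -> X) : Prop := forall n, ll (c n.+1) (c n).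

Definition separable_LMS : Prop :=
  exists S : set X, countable S /\
    forall x y, ll x y -> exists2 s, S s & ll x s /\ ll s y.

Definition chron_dense : Prop :=
  (forall x, Ipast x !=set0 ->
     exists c, future_chain c /\ c @ \oo --> x) /\
  (forall x, Ifut x !=set0 ->
     exists c, past_chain c /\ c @ \oo --> x).

Definition past_set (P : set X) : Prop := P = IpastS P.
Definition future_set (F : set X) : Prop := F = IfutS F.

Definition downS (S : set X) : set X :=
  IpastS [set p | forall q, S q -> ll p q].
Definition upS (S : set X) : set X :=
  IfutS [set p | forall q, S q -> ll q p].

Definition IP (P : set X) : Prop :=
  past_set P /\
  ~ (exists A B, past_set A /\ past_set B /\ A `<` P /\ B `<` P /\ P = A `|` B).
Definition IF (F : set X) : Prop :=
  future_set F /\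
  ~ (exists A B, future_set A /\ future_set B /\ A `<` F /\ B `<` F /\ F = A `|` B).

Definition maximal_IP_in (P D : set X) : Prop :=
  IP P /\ P `<=` D /\ forall P', IP P' -> P `<=` P' -> P' `<=` D -> P' = P.
Definition maximal_IF_in (F D : set X) : Prop :=
  IF F /\ F `<=` D /\ forall F', IF F' -> F `<=` F' -> F' `<=` D -> F' = F.

Definition Srel_ne (P F : set X) : Prop :=
  IP P /\ IF F /\ P !=set0 /\ F !=set0 /\
  maximal_IP_in P (downS F) /\ maximal_IF_in F (upS P).

Definition Srel (P F : set X) : Prop :=
  Srel_ne P F \/
  (IP P /\ P !=set0 /\ F = set0 /\ forall F', Srel_ne P F' -> False) \/
  (IF F /\ F !=set0 /\ P = set0 /\ forall P', Srel_ne P' F -> False).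

Definition S_property : Prop :=
  forall x, Srel (Ipast x) (Ifut x) /\
    (forall y, IF (Ifut y) -> Srel (Ipast x) (Ifut y) -> Ifut y = Ifut x) /\
    (forall y, IP (Ipast y) -> Srel (Ipast y) (Ifut x) -> Ipast y = Ipast x).

Definition ccompletion : set (set X * set X) := [set a | Srel a.1 a.2].

Definition chains_for (F P' : set X) : set ((nat -> X) * (nat -> X)) :=
  [set qp | past_chain qp.1 /\ IfutS (range qp.1) = F /\
            future_chain qp.2 /\ IpastS (range qp.2) = P'].

(* extended time separation on the c-completion; the limit is taken along
   one (chosen) admissible pair of chains -- by the paper it does not depend
   on that choice. *)
Definition taubar (a b : set X * set X) : \bar R :=
  match pselect (a.2 = set0 \/ b.1 = set0) with
  | left _ => 0
  | right _ =>
    match pselect (exists qp, chains_for a.2 b.1 qp) with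
    | left h => let qp := proj1_sig (cid h) in
                limn (fun n => tau (qp.1 n) (qp.2 n))
    | right _ => 0
    end
  end.

Definition llbar (a b : set X * set X) : Prop := 0 < taubar a b.

End LMS.

From HB Require Import structures.
From mathcomp Require Import all_boot all_order all_algebra.
From mathcomp Require Import all_classical all_reals all_analysis.
Set Implicit Arguments. Unset Strict Implicit.
Import Order.TTheory GRing.Theory Num.Theory.
Local Open Scope classical_set_scope.
Local Open Scope ereal_scope.

(* For a past chain q and a future chain p, the reverse triangle inequality
   makes n |-> tau (q n) (p n) nondecreasing, and its limit bounds tau x z for
   every x in I^+[q] and z in I^-[p].  Take chains (q1, p1) computing
   taubar a b and (q2, p2) computing taubar b c.  As b.1 lies in the common
   past of b.2, each p1 n is followed by some r with r << q2 n, so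
   q1 n << p1 n << r << q2 n << p2 n and the reverse triangle inequality gives
   tau (q1 n) (p1 n) + tau (q2 n) (p2 n) <= tau (q1 n) (p2 n) <= taubar a c;
   letting n go to infinity yields the claim. *)

Section ChainDiagonal.
Variables (R : realType) (X : topologicalType) (tau : X -> X -> \bar R).

Definition tau_lim (q p : nat -> X) : \bar R := limn (fun n => tau (q n) (p n)).

Hypothesis tauL : is_LMS tau.

Lemma tau_ge0 x y : 0 <= tau x y.
Proof. by case: tauL. Qed.

Lemma tau_reverse_triangle x y z :
  ll tau x y -> ll tau y z -> tau x y + tau y z <= tau x z.
Proof. by case: tauL => _ [_]; apply. Qed.

Lemma ll_trans x y z : ll tau x y -> ll tau y z -> ll tau x z.
Proof.
move=> hxy hyz; apply: lt_le_trans (tau_reverse_triangle hxy hyz).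
by apply: lt_le_trans hxy _; rewrite leeDl ?tau_ge0.
Qed.

Lemma tau_ll_l x' x y : ll tau x' x -> tau x y <= tau x' y.
Proof.
move=> hx; have [/le_trans->//|hxy] := leP (tau x y) 0; first exact: tau_ge0.
by apply: le_trans (tau_reverse_triangle hx hxy); rewrite leeDr ?tau_ge0.
Qed.

Lemma tau_ll_r x y y' : ll tau y y' -> tau x y <= tau x y'.
Proof.
move=> hy; have [/le_trans->//|hxy] := leP (tau x y) 0; first exact: tau_ge0.
by apply: le_trans (tau_reverse_triangle hxy hy); rewrite leeDl ?tau_ge0.
Qed.

Lemma past_chain_tau_mono q z : past_chain tau q ->
  {homo q : n m / (n <= m)%N >-> tau n z <= tau m z}.
Proof.
move=> hq; apply: homo_leq => [//|? ? ?|n]; first exact: le_trans.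
exact: tau_ll_l (hq n).
Qed.

Lemma future_chain_tau_mono p x : future_chain tau p ->
  {homo p : n m / (n <= m)%N >-> tau x n <= tau x m}.
Proof.
move=> hp; apply: homo_leq => [//|? ? ?|n]; first exact: le_trans.
exact: tau_ll_r (hp n).
Qed.

Variables (q p : nat -> X).
Hypotheses (hq : past_chain tau q) (hp : future_chain tau p).

Let diag n := tau (q n) (p n).

Lemma chain_diag_nondecreasing : nondecreasing_seq diag.
Proof.
move=> n m nm; apply: le_trans (past_chain_tau_mono _ hq nm).
exact: future_chain_tau_mono.
Qed.

Lemma chain_diag_cvg : cvgn diag.
Proof. exact: ereal_nondecreasing_is_cvgn chain_diag_nondecreasing. Qed.

Lemma tau_limE : tau_lim q p = ereal_sup (range diag).
Proof.
by apply: cvg_lim => //; apply: ereal_nondecreasing_cvgn chain_diag_nondecreasing.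
Qed.

Lemma tau_lim_ge0 : 0 <= tau_lim q p.
Proof. by apply: lime_ge chain_diag_cvg _; apply: nearW => n; exact: tau_ge0. Qed.

Lemma tau_le_lim n k : tau (q n) (p k) <= tau_lim q p.
Proof.
rewrite tau_limE; apply: (@le_trans _ _ (diag (maxn n k))); last first.
  by apply: ereal_sup_ubound; exists (maxn n k).
apply: le_trans (past_chain_tau_mono _ hq (leq_maxl n k)).
exact: future_chain_tau_mono (leq_maxr n k).
Qed.

Lemma tau_lim_gt0_near : 0 < tau_lim q p -> \forall n \near \oo, ll tau (q n) (p n).
Proof.
rewrite tau_limE => /ereal_sup_gt[_ [n0 _ <-] pos0].
near=> n; apply: lt_le_trans pos0 (chain_diag_nondecreasing _).
by near: n; exists n0.
Unshelve. all: by end_near.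
Qed.

End ChainDiagonal.

Section CompletionChains.
Variables (R : realType) (X : topologicalType) (tau : X -> X -> \bar R).

Lemma chains_for_memF F P q p n : chains_for tau F P (q, p) -> F (q n).
Proof. by move=> [hq [<- _]]; exists (q n.+1); [exists n.+1 | exact: hq]. Qed.

Lemma chains_for_memP F P q p n : chains_for tau F P (q, p) -> P (p n).
Proof. by move=> [_ [_ [hp <-]]]; exists (p n.+1); [exists n.+1 | exact: hp]. Qed.

Lemma taubar_chains a b : (exists qp, chains_for tau a.2 b.1 qp) ->
  exists2 qp : (nat -> X) * (nat -> X), chains_for tau a.2 b.1 qp &
    taubar tau a b = tau_lim tau qp.1 qp.2.
Proof.
move=> hex; rewrite /taubar; case: pselect => [empty|_].
  have [[q p] ch] := hex.
  by case: empty => e;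
    [move: (chains_for_memF 0 ch) | move: (chains_for_memP 0 ch)]; rewrite e.
case: pselect => [h|//]; exists (proj1_sig (cid h)) => //; exact: proj2_sig (cid h).
Qed.

Lemma taubar_gt0_chains a b : 0 < taubar tau a b -> exists qp, chains_for tau a.2 b.1 qp.
Proof.
rewrite /taubar; case: pselect => [_|_]; first by rewrite ltxx.
by case: pselect => [h _|_]; [exact: h | rewrite ltxx].
Qed.

Lemma Srel_sub_downS P F : Srel tau P F -> F !=set0 -> P `<=` downS tau F.
Proof.
case=> [[_ [_ [_ [_ [[_ [PF _]] _]]]]] | [[_ [_ [-> _]]] /set0P/eqP | [_ [_ [-> _]]]]] //.
by move=> _ ? [].
Qed.

Hypothesis tauL : is_LMS tau.

Lemma tau_le_chains_lim F P q p x z : chains_for tau F P (q, p) -> F x -> P z ->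
  tau x z <= tau_lim tau q p.
Proof.
move=> ch; have [hq [<- [hp <-]]] := ch.
move=> [_ [m _ <-] qx] [_ [k _ <-] zp].
apply: le_trans (tau_le_lim tauL hq hp m k).
exact: le_trans (tau_ll_l tauL _ qx) (tau_ll_r tauL _ zp).
Qed.

Lemma tau_across_downS P F x y w z : P `<=` downS tau F -> P y -> F w ->
  ll tau x y -> ll tau w z -> tau x y + tau w z <= tau x z.
Proof.
move=> PF Py Fw xy wz; have [r rF yr] := PF _ Py; have rw := rF _ Fw.
have xr := ll_trans tauL xy yr; have rz := ll_trans tauL rw wz.
apply: le_trans (tau_reverse_triangle tauL xr rz); apply: leeD.
  by apply: le_trans (tau_reverse_triangle tauL xy yr); rewrite leeDl ?tau_ge0.
by apply: le_trans (tau_reverse_triangle tauL rw wz); rewrite leeDr ?tau_ge0.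
Qed.

Lemma chains_lim_triangle F1 P1 F2 P2 q1 p1 q2 p2 q3 p3 :
  chains_for tau F1 P1 (q1, p1) -> chains_for tau F2 P2 (q2, p2) ->
  chains_for tau F1 P2 (q3, p3) -> P1 `<=` downS tau F2 ->
  0 < tau_lim tau q1 p1 -> 0 < tau_lim tau q2 p2 ->
  tau_lim tau q1 p1 + tau_lim tau q2 p2 <= tau_lim tau q3 p3.
Proof.
move=> ch1 ch2 ch3 P1F2 pos1 pos2.
have [/= hq1 [_ [/= hp1 _]]] := ch1; have [/= hq2 [_ [/= hp2 _]]] := ch2.
have nd1 := chain_diag_nondecreasing tauL hq1 hp1.
have nd2 := chain_diag_nondecreasing tauL hq2 hp2.
rewrite -(limeD (chain_diag_cvg tauL hq1 hp1) (chain_diag_cvg tauL hq2 hp2)); last first.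
  apply: ge0_adde_def; rewrite inE; exact: tau_lim_ge0.
have ev1 := tau_lim_gt0_near tauL hq1 hp1 pos1.
have ev2 := tau_lim_gt0_near tauL hq2 hp2 pos2.
apply: lime_le.
  by apply: ereal_nondecreasing_is_cvgn => n m nm; apply: leeD; [exact: nd1|exact: nd2].
near=> n; apply: le_trans
  (tau_le_chains_lim ch3 (chains_for_memF n ch1) (chains_for_memP n ch2)).
apply: tau_across_downS P1F2 (chains_for_memP n ch1) (chains_for_memF n ch2) _ _.
  by near: n; exact: ev1.
by near: n; exact: ev2.
Unshelve. all: by end_near.
Qed.

End CompletionChains.

Theorem mainTheorem17 (R : realType) (X : topologicalType)
  (tau : X -> X -> \bar R) :
  is_LMS tau -> separable_LMS tau -> chron_dense tau -> S_property tau ->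
  forall a b c : set X * set X,
    ccompletion tau a -> ccompletion tau b -> ccompletion tau c ->
    llbar tau a b -> llbar tau b c ->
    taubar tau a c >= taubar tau a b + taubar tau b c.
Proof.
(* Separability, chronological density and the S-property only serve to make
   taubar independent of the chains used; [taubar] fixes one choice of them. *)
move=> tauL _ _ _ a b c _ hb _ hab hbc.
have [[q1 p1] ch1 e1] := taubar_chains (taubar_gt0_chains hab).
have [[q2 p2] ch2 e2] := taubar_chains (taubar_gt0_chains hbc).
have [[q3 p3] ch3 ->] : exists2 qp : (nat -> X) * (nat -> X),
    chains_for tau a.2 c.1 qp & taubar tau a c = tau_lim tau qp.1 qp.2.
  apply: taubar_chains; exists (q1, p2).
  by have [? [? _]] := ch1; have [_ [_ ?]] := ch2.
have b1_sub : b.1 `<=` downS tau b.2.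
  by apply: Srel_sub_downS hb _; exists (q2 0%N); exact: (chains_for_memF 0 ch2).
move: hab hbc; rewrite /llbar e1 e2 /= => hab hbc.
by have := chains_lim_triangle tauL ch1 ch2 ch3 b1_sub hab hbc.
Qed.
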